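(* Let $\ell\ge1$ be an integer and let $\tau^\ell$ be the $(2\ell+1)\times(2\ell+1)$ matrix defined in the context. Then: (a) $\tau^\ell$ is invertible (indeed unitary); (b) $|\tau^\ell_{0,0}|<1$; (c) Let $v\in\mathbb{C}^{2\ell+1}$ (coordinates indexed by $-\ell,\dots,\ell$) be supported either on $\{-\ell,\dots,-1\}$ or on $\{1,\dots,\ell\}$, and suppose $\tau^\ell v$ is supported either on $\{n\in\{-\ell,\dots,\ell\}: n+\ell \text{ even}\}$ or on $\{n\in\{-\ell,\dots,\ell\}: n+\ell\text{ odd}\}$. Then $v=0$ (and hence $\tau^\ell v=0$). (All four combinations of these support conditions are covered.)
   Context: For $\ell\in\{\tfrac12,1,\tfrac32,2,\dots\}$ and $m,n\in\{-\ell,-\ell+1,\dots,\ell\}$, define $$\tau^\ell_{m,n}=\sqrt{\frac{(\ell-m)!(\ell+m)!}{(\ell-n)!(\ell+n)!}}\;\frac{i^{2\ell}}{2^\ell}\int_{|z|=1}(z+1)^{\ell-n}(z-1)^{\ell+n}z^{m-\ell}\,\frac{dz}{2\pi i z},$$ i.e. the prefactor times the coefficient of $z^{\ell-m}$ in the polynomial $(z+1)^{\ell-n}(z-1)^{\ell+n}$. The matrix $\tau^\ell=(\tau^\ell_{m,n})$, rows indexed by $m$ and columns by $n$ in increasing order from $-\ell$ to $\ell$, is the matrix of the spin-$\ell$ irreducible representation of $SU(2)$ evaluated at $\frac{1}{\sqrt2}\begin{pmatrix} i & i\\ i & -i\end{pmatrix}$, and is unitary. *)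

From HB Require Import structures.
From mathcomp Require Import all_boot all_order all_algebra all_field.
Set Implicit Arguments. Unset Strict Implicit. Unset Printing Implicit Defensive.
Import Order.TTheory GRing.Theory Num.Theory.
Local Open Scope ring_scope.

(* Indices: row index i : 'I_(2l+1) encodes m = i - l, column j encodes n = j - l.
   Then l - m = 2l - i, l + m = i, l - n = 2l - j, l + n = j. *)

(* coefficient of z^(l-m) in (z+1)^(l-n) (z-1)^(l+n) *)
Definition tau_coef (l i j : nat) : algC :=
  ((('X + 1) ^+ (2 * l - j)%N * ('X - 1) ^+ j) : {poly algC})`_(2 * l - i)%N.

Definition tau (l : nat) : 'M[algC]_(2 * l + 1) :=
  \matrix_(i < 2 * l + 1, j < 2 * l + 1)
    (sqrtC (((2 * l - i)`! * i`!)%:R / ((2 * l - j)`! * j`!)%:R)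
     * ('i ^+ (2 * l) / 2 ^+ l) * tau_coef l i j).

Definition adjmx n (A : 'M[algC]_n) : 'M[algC]_n := (map_mx Num.conj A)^T.

(* v supported on {-l,...,-1}, i.e. index i with i < l *)
Definition supp_neg l (v : 'cV[algC]_(2 * l + 1)) : Prop :=
  forall i : 'I_(2 * l + 1), (l <= i)%N -> v i 0 = 0.
(* v supported on {1,...,l}, i.e. index i with l < i *)
Definition supp_pos l (v : 'cV[algC]_(2 * l + 1)) : Prop :=
  forall i : 'I_(2 * l + 1), (i <= l)%N -> v i 0 = 0.
(* supported on {n : n + l even}; n + l = index j *)
Definition supp_even l (w : 'cV[algC]_(2 * l + 1)) : Prop :=
  forall j : 'I_(2 * l + 1), odd j -> w j 0 = 0.
Definition supp_odd l (w : 'cV[algC]_(2 * l + 1)) : Prop :=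
  forall j : 'I_(2 * l + 1), ~~ odd j -> w j 0 = 0.

(* the index encoding m = 0, i.e. i = l *)
Lemma mid_lt (l : nat) : (l < 2 * l + 1)%N.
Proof. by rewrite addn1 ltnS mul2n -addnn leq_addr. Qed.
Definition mid (l : nat) : 'I_(2 * l + 1) := Ordinal (mid_lt l).

From HB Require Import structures.
From mathcomp Require Import all_boot all_order all_algebra all_field.
From mathcomp Require Import ring zify.
Set Implicit Arguments. Unset Strict Implicit. Unset Printing Implicit Defensive.
Import Order.TTheory GRing.Theory Num.Theory.
Local Open Scope ring_scope.

(* Up to the diagonal scaling by d_j = sqrt((2l-j)! j!) and the scalar
   c = i^(2l) / 2^l, the entry tau_(i,j) is the Krawtchouk coefficient
   K_(i,j) = [z^(2l-i)] (z+1)^(2l-j) (z-1)^j, whose generating function is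
   sum_i K_(i,j) a^(2l-i) b^i = (a+b)^(2l-j) (a-b)^j.  Substituting
   a = z+1, b = z-1 gives K^2 = 2^(2l); the symmetry of (1 + x + y(1-x))^(2l)
   in x and y gives C(2l,j) K_(i,j) = C(2l,i) K_(j,i).  Together they make the
   rows of K orthogonal for the weights 1/((2l-j)! j!), which is the
   unitarity of tau.  In the orthogonality relation for row l the terms
   j = l and j = 0 are both positive, whence |K_(l,l)| < 2^l, i.e.
   |tau_(0,0)| < 1.  Finally (tau v)_i is, up to nonzero factors, the
   coefficient of z^(2l-i) in f = sum_j (v_j / d_j) (z+1)^(2l-j) (z-1)^j.
   The support of v makes f divisible by (z+1)^(l+1) or by (z-1)^(l+1); the
   parity of tau v makes f even or odd, hence divisible by both, which forces
   f = 0 since deg f <= 2l; then v = 0 because K is invertible. *)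

Section Homogenization.
Variable R : comNzRingType.
Implicit Types (p a b : {poly R}) (c : R).

Definition homog m p a b : {poly R} :=
  \sum_(k < m.+1) (p`_k)%:P * a ^+ k * b ^+ (m - k).

Lemma homog_XaddC_mul m p c a b : (size p <= m.+1)%N ->
  homog m.+1 (('X + c%:P) * p) a b = (a + c%:P * b) * homog m p a b.
Proof.
move=> sp; rewrite /homog mulrDl.
under eq_bigr do rewrite coefD polyCD !mulrDl.
rewrite big_split /= [RHS]mulrDl; congr (_ + _).
  rewrite big_ord_recl coefXM /= mul0r mul0r add0r big_distrr /=.
  by apply: eq_bigr => i _; rewrite coefXM /= subSS exprS; ring.
rewrite big_ord_recr /= coefCM (nth_default _ sp) mulr0 mul0r mul0r addr0.
rewrite big_distrr /=; apply: eq_bigr => i _; rewrite coefCM polyCM.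
by rewrite subSn ?exprS; [ring | rewrite -ltnS].
Qed.

Lemma size_Xadd1_Xsub1_exp u v :
  size (('X + 1) ^+ u * ('X - 1) ^+ v : {poly R}) = (u + v).+1.
Proof.
have Xadd1E : 'X + 1 = 'X - (-1)%:P :> {poly R} by rewrite polyCN opprK polyC1.
have Xsub1E : 'X - 1 = 'X - 1%:P :> {poly R} by rewrite polyC1.
rewrite Xadd1E Xsub1E size_Mmonic ?monic_exp ?monicXsubC //; last first.
  by rewrite -size_poly_eq0 size_exp_XsubC.
by rewrite !size_exp_XsubC addSn addnS.
Qed.

Lemma homog_Xadd1_Xsub1_exp u v a b :
  homog (u + v) (('X + 1) ^+ u * ('X - 1) ^+ v) a b = (a + b) ^+ u * (a - b) ^+ v.
Proof.
elim: u => [|u IHu].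
  rewrite add0n !expr0 !mul1r; elim: v => [|v IHv].
    by rewrite /homog big_ord_recl big_ord0 addr0 coefC /= !expr0 !mulr1.
  rewrite exprS -polyC1 -polyCN -[in RHS]mulN1r homog_XaddC_mul.
    by rewrite polyCN polyC1 IHv exprS mulN1r.
  by have := size_Xadd1_Xsub1_exp 0 v; rewrite expr0 mul1r polyCN polyC1 => ->.
rewrite addSn exprS -mulrA -{1}polyC1 homog_XaddC_mul ?size_Xadd1_Xsub1_exp //.
by rewrite IHu mul1r exprS mulrA.
Qed.

End Homogenization.

Lemma leq_ord_addn1 n (i : 'I_(n + 1)) : (i <= n)%N.
Proof. by rewrite -ltnS -[n.+1]addn1 ltn_ord. Qed.

Section Krawtchouk.
Variables (R : comNzRingType) (l : nat).
Implicit Types (i j k : nat) (a b : {poly R}).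

Definition kraw_poly j : {poly R} := ('X + 1) ^+ (2 * l - j) * ('X - 1) ^+ j.

Definition kraw i j : R := (kraw_poly j)`_(2 * l - i).

Lemma kraw_gen j a b : (j <= 2 * l)%N ->
  \sum_(i < 2 * l + 1) (kraw i j)%:P * a ^+ (2 * l - i) * b ^+ i
  = (a + b) ^+ (2 * l - j) * (a - b) ^+ j.
Proof.
move=> hj; rewrite -homog_Xadd1_Xsub1_exp subnK // /homog addn1.
rewrite (reindex_inj rev_ord_inj) /=; apply: eq_bigr => k _.
by rewrite /kraw subSS subKn // -ltnS.
Qed.

Lemma coef_kraw_rev i j : (i <= 2 * l)%N -> (j <= 2 * l)%N ->
  ((1 + 'X) ^+ (2 * l - j) * (1 - 'X) ^+ j : {poly R})`_i = kraw i j.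
Proof.
move=> hi hj; rewrite -(kraw_gen 1 'X hj).
under eq_bigr do rewrite expr1n mulr1 mul_polyC.
rewrite (coef_sumMXn _ _ (fun k : 'I_(2 * l + 1) => kraw k j) (@nat_of_ord _)).
under eq_bigl do rewrite andTb.
by rewrite (big_ord1_eq _ (fun k => kraw k j)) addn1 ltnS hi.
Qed.

Lemma kraw_row0 j : (j <= 2 * l)%N -> kraw 0 j = 1.
Proof.
move=> hj; apply: polyC_inj; have := kraw_gen 1 0 hj.
rewrite addn1 big_ord_recl big1 => [|k _]; last by rewrite expr0n /= mulr0.
by rewrite expr1n expr0 !mulr1 subr0 !addr0 !expr1n mulr1 polyC1.
Qed.

Lemma kraw_involutive i k : (i <= 2 * l)%N -> (k <= 2 * l)%N ->
  \sum_(j < 2 * l + 1) kraw i j * kraw j k = 2 ^+ (2 * l) * (i == k)%:R.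
Proof.
move=> hi hk; have := kraw_gen ('X + 1) ('X - 1) hk.
have -> : 'X + 1 + ('X - 1) = 2%:P * 'X :> {poly R} by rewrite polyC_natr; ring.
have -> : 'X + 1 - ('X - 1) = 2%:P :> {poly R} by rewrite polyC_natr; ring.
rewrite exprMn mulrAC -exprD subnK // -polyC_exp => /(congr1 (coefp (2 * l - i))) /=.
rewrite coefCM coefXn coef_sum => sumE.
have -> : (i == k) = (2 * l - i == 2 * l - k)%N by apply/eqP/eqP; lia.
rewrite -sumE; apply: eq_bigr => j _.
by rewrite -mulrA coefCM mulrC.
Qed.

Lemma coef_kraw_bivariate i j : (i <= 2 * l)%N -> (j <= 2 * l)%N ->
  ((1 + 'X + 'Y * (1 - 'X)) ^+ (2 * l) : {poly {poly R}})`_i`_j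
  = 'C(2 * l, j)%:R * kraw i j.
Proof.
move=> hi hj; rewrite exprDn.
have termE k : ((1 + 'X) ^+ (2 * l - k) * ('Y * (1 - 'X)) ^+ k : {poly {poly R}})
    = ('X^k)%:P * ((1 + 'X) ^+ (2 * l - k) * (1 - 'X) ^+ k : {poly R})^:P.
  rewrite rmorphM !rmorphXn rmorphD rmorphB /= map_polyX rmorph1 exprMn; ring.
under eq_bigr do rewrite termE.
rewrite !coef_sum.
under eq_bigr do rewrite coefMn coefCM coef_map /= coefMn coefMC coefXn.
rewrite (bigD1 (Ordinal (hj : j < (2 * l).+1)%N)) //= eqxx mul1r big1 ?addr0.
  by rewrite coef_kraw_rev // mulr_natl.
move=> k /negbTE; rewrite -val_eqE /= eq_sym => ->.
by rewrite mul0r mul0rn.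
Qed.

Lemma binomial_kraw_sym i j : (i <= 2 * l)%N -> (j <= 2 * l)%N ->
  'C(2 * l, j)%:R * kraw i j = 'C(2 * l, i)%:R * kraw j i.
Proof.
move=> hi hj; rewrite -!coef_kraw_bivariate //.
set F : {poly {poly R}} := (1 + 'X + 'Y * (1 - 'X)) ^+ (2 * l).
suff swapF : swapXY F = F by rewrite -{1}swapF coef_swapXY.
rewrite rmorphXn !rmorphD rmorphM rmorphB rmorph1 /= swapXY_X swapXY_Y.
by congr (_ ^+ _); ring.
Qed.

Lemma kraw_col0 i : (i <= 2 * l)%N -> kraw i 0 = 'C(2 * l, i)%:R.
Proof.
by move=> hi; have := binomial_kraw_sym hi (leq0n _); rewrite bin0 mul1r kraw_row0 ?mulr1.
Qed.

Lemma sum_kraw_involutive (w : 'I_(2 * l + 1) -> R) (k : 'I_(2 * l + 1)) :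
  \sum_(i < 2 * l + 1) kraw k i * \sum_(j < 2 * l + 1) kraw i j * w j
  = 2 ^+ (2 * l) * w k.
Proof.
have termE (j : 'I_(2 * l + 1)) :
    \sum_(i < 2 * l + 1) kraw k i * (kraw i j * w j) = 2 ^+ (2 * l) * (k == j)%:R * w j.
  under eq_bigr do rewrite mulrA.
  by rewrite -mulr_suml kraw_involutive ?leq_ord_addn1 // (inj_eq val_inj).
under eq_bigr do rewrite big_distrr.
rewrite exchange_big (eq_bigr _ (fun x _ => termE x)) (bigD1 k) //= eqxx mulr1.
by rewrite big1 ?addr0 // => j /negbTE; rewrite eq_sym => ->; rewrite mulr0 mul0r.
Qed.

End Krawtchouk.

Arguments kraw_poly {R} l j.
Arguments kraw {R} l i j.

Lemma rmorph_kraw (R S : comNzRingType) (f : {rmorphism R -> S}) l i j :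
  f (kraw l i j) = kraw l i j.
Proof.
rewrite /kraw -coef_map /kraw_poly rmorphM !rmorphXn rmorphD rmorphB /=.
by rewrite map_polyX rmorph1.
Qed.

Section KrawtchoukOrthogonality.
Variables (F : numFieldType) (l : nat).

Definition fact_weight j : F := ((2 * l - j)`! * j`!)%:R.

Lemma fact_weight_gt0 j : 0 < fact_weight j.
Proof. by rewrite ltr0n muln_gt0 !fact_gt0. Qed.

Lemma fact_weightE j : (j <= 2 * l)%N ->
  fact_weight j = (2 * l)`!%:R / 'C(2 * l, j)%:R.
Proof.
move=> hj; rewrite -(bin_fact hj) natrM mulrAC divff ?mul1r ?pnatr_eq0 -?lt0n ?bin_gt0 //.
by rewrite /fact_weight mulnC.
Qed.

Lemma kraw_real i j : (kraw l i j : F) \is Num.real.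
Proof. by rewrite -(rmorph_kraw intr) realz. Qed.

Lemma kraw_orthogonal i k : (i <= 2 * l)%N -> (k <= 2 * l)%N ->
  \sum_(j < 2 * l + 1) kraw l i j * kraw l k j / fact_weight j
  = 2 ^+ (2 * l) * (i == k)%:R / fact_weight i :> F.
Proof.
move=> hi hk.
have termE (j : 'I_(2 * l + 1)) : kraw l i j * kraw l k j / fact_weight j
    = 'C(2 * l, k)%:R / (2 * l)`!%:R * (kraw l i j * kraw l j k).
  have hj := leq_ord_addn1 j; have sym := binomial_kraw_sym F hk hj.
  by rewrite fact_weightE // invf_div [RHS]mulrCA [in RHS]mulrAC -sym; ring.
rewrite (eq_bigr _ (fun j _ => termE j)) -mulr_sumr kraw_involutive //.
have [<-|_] := eqVneq i k; last by rewrite !mulr0 mul0r.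
rewrite fact_weightE // invf_div; ring.
Qed.

Lemma kraw_mid_lt : (0 < l)%N -> `|kraw l l l : F| < 2 ^+ l.
Proof.
move=> l_gt0; have hl : (l <= 2 * l)%N by rewrite leq_pmull.
have := kraw_orthogonal hl hl; rewrite eqxx mulr1.
have mid : (l < 2 * l + 1)%N by rewrite addn1 ltnS.
have zero_lt : (0 < 2 * l + 1)%N by rewrite addn1.
rewrite (bigD1 (Ordinal mid)) //= (bigD1 (Ordinal zero_lt)) /=; last first.
  by rewrite -val_eqE /= eq_sym -lt0n.
rewrite kraw_col0 // => orthE.
have sq_lt : kraw l l l * kraw l l l / fact_weight l < 2 ^+ (2 * l) / fact_weight l.
  rewrite -orthE ltrDl ltr_pwDl ?sumr_ge0 // => [|j _].
    by rewrite divr_gt0 ?fact_weight_gt0 // mulr_gt0 // ltr0n bin_gt0.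
  by rewrite divr_ge0 ?(ltW (fact_weight_gt0 _)) // -expr2 real_exprn_even_ge0 ?kraw_real.
move: sq_lt; rewrite ltr_pM2r ?invr_gt0 ?fact_weight_gt0 //.
rewrite -expr2 -real_normK ?kraw_real //.
by rewrite mulnC exprM ltr_pXn2r // nnegrE ?exprn_ge0.
Qed.

End KrawtchoukOrthogonality.

Lemma sqrtC_div (C : numClosedFieldType) (x y : C) :
  0 <= x -> 0 < y -> sqrtC (x / y) = sqrtC x / sqrtC y.
Proof.
move=> x_ge0 y_gt0; have y_ge0 := ltW y_gt0.
have sy_neq0 : sqrtC y != 0 by rewrite gt_eqF ?sqrtC_gt0.
apply: (mulIf sy_neq0); rewrite divfK // -sqrtCM ?nnegrE ?divr_ge0 //.
by rewrite divfK // gt_eqF.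
Qed.

Section TauMatrix.
Variable l : nat.

Definition sqrt_fact_weight j : algC := sqrtC (fact_weight algC l j).

Definition tau_scale : algC := 'i ^+ (2 * l) / 2 ^+ l.

Lemma sqrt_fact_weight_gt0 j : 0 < sqrt_fact_weight j.
Proof. by rewrite sqrtC_gt0 fact_weight_gt0. Qed.

Lemma sqrt_fact_weight_neq0 j : sqrt_fact_weight j != 0.
Proof. by rewrite gt_eqF ?sqrt_fact_weight_gt0. Qed.

Lemma tau_scaleE : tau_scale = (-1) ^+ l / 2 ^+ l.
Proof. by rewrite /tau_scale exprM sqrCi. Qed.

Lemma tauE (i j : 'I_(2 * l + 1)) :
  tau l i j = sqrt_fact_weight i / sqrt_fact_weight j * tau_scale * kraw l i j.
Proof. by rewrite mxE sqrtC_div ?ler0n //; apply: fact_weight_gt0. Qed.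

Lemma tau_real (i j : 'I_(2 * l + 1)) : tau l i j \is Num.real.
Proof.
rewrite tauE tau_scaleE !realM ?kraw_real ?realV ?realX ?realN ?real1 ?realn //.
all: exact/gtr0_real/sqrt_fact_weight_gt0.
Qed.

Lemma adjmx_tau : adjmx (tau l) = (tau l)^T.
Proof.
by congr trmx; apply/matrixP => i j; rewrite [LHS]mxE; apply/CrealP/tau_real.
Qed.

Lemma tau_scale_sqr : tau_scale ^+ 2 * 2 ^+ (2 * l) = 1.
Proof.
rewrite tau_scaleE exprMn exprVn -!exprM mulnC !exprM sqrrN !expr1n mul1r.
by rewrite mulVf // !expf_neq0 // pnatr_eq0.
Qed.

Lemma tau_mul_tr : tau l *m (tau l)^T = 1%:M.
Proof.
apply/matrixP => i k; rewrite [LHS]mxE [RHS]mxE.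
have termE (j : 'I_(2 * l + 1)) : tau l i j * (tau l)^T j k
    = tau_scale ^+ 2 * sqrt_fact_weight i * sqrt_fact_weight k
      * (kraw l i j * kraw l k j / fact_weight algC l j).
  rewrite [_^T _ _]mxE !tauE -[fact_weight _ _ j]sqrtCK -/(sqrt_fact_weight j).
  by field; apply: sqrt_fact_weight_neq0.
rewrite (eq_bigr _ (fun j _ => termE j)) -mulr_sumr.
rewrite kraw_orthogonal ?leq_ord_addn1 // (inj_eq val_inj).
have [<-|_] := eqVneq i k; last by rewrite !mulr0 mul0r mulr0.
rewrite /= mulr1n mulr1 -[RHS]tau_scale_sqr.
rewrite -[fact_weight _ _ i]sqrtCK -/(sqrt_fact_weight i).
by field; apply: sqrt_fact_weight_neq0.
Qed.

Lemma tau_mid_lt1 : (0 < l)%N -> `|tau l (mid l) (mid l)| < 1.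
Proof.
move=> l_gt0; rewrite tauE divff ?sqrt_fact_weight_neq0 // mul1r tau_scaleE.
rewrite !normrM normfV !normrX normrN1 normr_nat expr1n mul1r mulrC.
by rewrite ltr_pdivrMr ?exprn_gt0 // mul1r kraw_mid_lt.
Qed.

End TauMatrix.

Section PolyParity.
Variable R : comNzRingType.
Implicit Types f : {poly R}.

Lemma comp_polyNX f :
  f \Po (- 'X) = even_poly f \Po 'X^2 - (odd_poly f \Po 'X^2) * 'X.
Proof.
have XsqrN : 'X^2 \Po (- 'X) = 'X^2 :> {poly R}.
  by rewrite expr2 comp_polyM comp_polyX mulrNN.
rewrite -{1}(poly_even_odd f) comp_polyD comp_polyM -!comp_polyA XsqrN comp_polyX.
by rewrite mulrN.
Qed.

Lemma comp_polyNX_parity f (s : bool) :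
  (forall k, odd k = ~~ s -> f`_k = 0) -> f \Po (- 'X) = (-1) ^+ s *: f.
Proof.
move=> f_parity; rewrite comp_polyNX -{3}(poly_even_odd f).
case: s f_parity => f_parity.
  have -> : even_poly f = 0.
    by apply/polyP => i; rewrite coef_even_poly coef0 f_parity ?odd_double.
  by rewrite comp_poly0 sub0r add0r scaleN1r.
have -> : odd_poly f = 0.
  by apply/polyP => i; rewrite coef_odd_poly coef0 f_parity //= odd_double.
by rewrite comp_poly0 mul0r subr0 addr0 scale1r.
Qed.

End PolyParity.

Section DvdpExpXsubC.
Variable R : fieldType.
Implicit Types f : {poly R}.

Lemma dvdp_sum (I : Type) (r : seq I) (P : pred I) (F : I -> {poly R}) d :
  (forall i, P i -> d %| F i) -> d %| \sum_(i <- r | P i) F i.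
Proof.
by move=> dF; apply: (big_ind (fun p => d %| p)) => // p q; apply: dvdp_add.
Qed.

Lemma dvdp_exp_XaddC_parity f (s : bool) c m :
  f \Po (- 'X) = (-1) ^+ s *: f -> ('X + c%:P) ^+ m %| f -> ('X - c%:P) ^+ m %| f.
Proof.
move=> f_sym /dvdpP [q fE]; have sign_neq0 : (-1) ^+ s != 0 :> R by rewrite signr_eq0.
rewrite -(dvdpZr _ _ sign_neq0) -f_sym fE.
rewrite comp_polyM rmorphXn /= comp_polyD comp_polyX comp_polyC.
have -> : - 'X + c%:P = - ('X - c%:P) by rewrite opprB addrC.
by rewrite exprNn mulrCA !dvdp_mull.
Qed.

Lemma dvdp_exp_XsubC2_eq0 f a b m : a != b ->
  ('X - a%:P) ^+ m %| f -> ('X - b%:P) ^+ m %| f -> (size f <= m + m)%N -> f = 0.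
Proof.
move=> neq_ab da db; apply: contraTeq => f_neq0; rewrite -ltnNge.
have cop : coprimep (('X - a%:P) ^+ m) (('X - b%:P) ^+ m).
  by rewrite coprimep_expl // coprimep_expr // coprimep_XsubC2 // subr_eq0 eq_sym.
have dab : ('X - a%:P) ^+ m * ('X - b%:P) ^+ m %| f by rewrite Gauss_dvdp // da db.
apply: leq_trans (dvdp_leq f_neq0 dab).
by rewrite size_mul ?expf_neq0 ?polyXsubC_eq0 // !size_exp_XsubC addSn addnS.
Qed.

End DvdpExpXsubC.

Section KrawtchoukCombination.
Variables (F : numFieldType) (l : nat).
Implicit Types w : 'I_(2 * l + 1) -> F.

Definition kraw_comb w : {poly F} := \sum_(j < 2 * l + 1) w j *: kraw_poly l j.

Lemma coef_kraw_comb w i :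
  (kraw_comb w)`_(2 * l - i) = \sum_(j < 2 * l + 1) kraw l i j * w j.
Proof. by rewrite coef_sum; apply: eq_bigr => j _; rewrite coefZ mulrC. Qed.

Lemma size_kraw_comb w : (size (kraw_comb w) <= 2 * l + 1)%N.
Proof.
rewrite (leq_trans (size_sum _ _ _)) //; apply/bigmax_leqP => j _.
rewrite (leq_trans (size_scale_leq _ _)) // size_Xadd1_Xsub1_exp.
by rewrite subnK ?leq_ord_addn1 ?addn1.
Qed.

Lemma dvdp_kraw_comb_Xadd1 w : (forall j : 'I_(2 * l + 1), (l <= j)%N -> w j = 0) ->
  ('X + 1) ^+ l.+1 %| kraw_comb w.
Proof.
move=> w_supp; apply: dvdp_sum => j _.
have [/w_supp->|j_lt] := leqP l j; first by rewrite scale0r dvdp0.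
rewrite -mul_polyC dvdp_mull // dvdp_mulr // dvdp_exp2l //.
by have := leq_ord_addn1 j; lia.
Qed.

Lemma dvdp_kraw_comb_Xsub1 w : (forall j : 'I_(2 * l + 1), (j <= l)%N -> w j = 0) ->
  ('X - 1) ^+ l.+1 %| kraw_comb w.
Proof.
move=> w_supp; apply: dvdp_sum => j _.
have [/w_supp->|j_gt] := leqP j l; first by rewrite scale0r dvdp0.
by rewrite -mul_polyC dvdp_mull // dvdp_mull // dvdp_exp2l.
Qed.

Lemma kraw_comb_eq0 w : kraw_comb w = 0 -> forall j, w j = 0.
Proof.
move=> comb0 k; have := sum_kraw_involutive w k.
rewrite big1 => [/esym/eqP|i _]; last by rewrite -coef_kraw_comb comb0 coef0 mulr0.
by rewrite mulf_eq0 expf_eq0 pnatr_eq0 andbF => /eqP.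
Qed.

Lemma kraw_comb_supp_parity_eq0 w (s : bool) :
  (forall j : 'I_(2 * l + 1), (l <= j)%N -> w j = 0) \/
  (forall j : 'I_(2 * l + 1), (j <= l)%N -> w j = 0) ->
  (forall k, odd k = ~~ s -> (kraw_comb w)`_k = 0) ->
  forall j, w j = 0.
Proof.
move=> w_supp comb_parity; apply: kraw_comb_eq0.
have comb_sym := comp_polyNX_parity comb_parity.
have Xadd1E : 'X + 1 = 'X - (-1)%:P :> {poly F} by rewrite polyCN opprK polyC1.
have Xsub1E : 'X - 1 = 'X + (-1)%:P :> {poly F} by rewrite polyCN polyC1.
have [dvd_add1 dvd_sub1] :
    ('X + 1) ^+ l.+1 %| kraw_comb w /\ ('X - 1) ^+ l.+1 %| kraw_comb w.
  case: w_supp => [/dvdp_kraw_comb_Xadd1 | /dvdp_kraw_comb_Xsub1] dvd; split => //.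
    by rewrite -polyC1 (dvdp_exp_XaddC_parity comb_sym) ?polyC1.
  by rewrite Xadd1E (dvdp_exp_XaddC_parity comb_sym) -?Xsub1E.
apply: (@dvdp_exp_XsubC2_eq0 _ _ (-1) 1 l.+1); rewrite -?Xadd1E -?polyC1 //.
- by rewrite lt_eqF // (lt_trans (ltrN10 _) ltr01).
- by rewrite (leq_trans (size_kraw_comb w)) //; lia.
Qed.

End KrawtchoukCombination.

Section TauSupport.
Variables (l : nat) (v : 'cV[algC]_(2 * l + 1)).

Let w j := v j 0 / sqrt_fact_weight l j.

Lemma tau_mulmx_coef i :
  (tau l *m v) i 0 = sqrt_fact_weight l i * tau_scale l * (kraw_comb w)`_(2 * l - i).
Proof.
rewrite mxE coef_kraw_comb mulr_sumr; apply: eq_bigr => j _.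
by rewrite tauE /w; field; apply: sqrt_fact_weight_neq0.
Qed.

Lemma kraw_comb_parity (s : bool) :
  (forall i : 'I_(2 * l + 1), odd i = ~~ s -> (tau l *m v) i 0 = 0) ->
  forall k, odd k = ~~ s -> (kraw_comb w)`_k = 0.
Proof.
move=> tv_parity k k_parity; have [k_le|k_gt] := leqP k (2 * l); last first.
  by rewrite nth_default // (leq_trans (size_kraw_comb w)) // addn1.
have i_lt : (2 * l - k < 2 * l + 1)%N by rewrite addn1 ltnS leq_subr.
have := tv_parity (Ordinal i_lt); rewrite tau_mulmx_coef /= subKn // oddB // oddM /=.
move=> /(_ k_parity)/eqP; rewrite !mulf_eq0 (negbTE (sqrt_fact_weight_neq0 _ _)) /=.
move=> /orP[|/eqP //].
by rewrite invr_eq0 !expf_eq0 (negbTE (neq0Ci _)) pnatr_eq0 !andbF.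
Qed.

Lemma tau_supp_eq0 :
  supp_neg v \/ supp_pos v -> supp_even (tau l *m v) \/ supp_odd (tau l *m v) -> v = 0.
Proof.
move=> v_supp tv_parity.
have [s /kraw_comb_parity comb_parity] : exists s : bool,
    forall i : 'I_(2 * l + 1), odd i = ~~ s -> (tau l *m v) i 0 = 0.
  by case: tv_parity => tv0; [exists false | exists true] => i hi; apply: tv0; rewrite hi.
have w_supp : (forall j : 'I_(2 * l + 1), (l <= j)%N -> w j = 0) \/
              (forall j : 'I_(2 * l + 1), (j <= l)%N -> w j = 0).
  by case: v_supp => v0; [left | right] => j /v0; rewrite /w => ->; rewrite mul0r.
apply/matrixP => j z; rewrite (ord1 z) mxE.
have := kraw_comb_supp_parity_eq0 w_supp comb_parity j.
rewrite /w => /eqP; rewrite mulf_eq0 invr_eq0 (negbTE (sqrt_fact_weight_neq0 _ _)).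
by rewrite orbF => /eqP.
Qed.

End TauSupport.

Theorem mainTheorem9 (l : nat) (hl : (1 <= l)%N) :
  [/\ tau l \in unitmx /\ tau l *m adjmx (tau l) = 1%:M,
      `| tau l (mid l) (mid l) | < 1
    & forall v : 'cV[algC]_(2 * l + 1),
        (supp_neg v \/ supp_pos v) ->
        (supp_even (tau l *m v) \/ supp_odd (tau l *m v)) ->
        v = 0].
Proof.
have tau_unitary : tau l *m adjmx (tau l) = 1%:M by rewrite adjmx_tau tau_mul_tr.
split; [split=> // | exact: tau_mid_lt1 | exact: tau_supp_eq0].
exact: (mulmx1_unit tau_unitary).1.
Qed.
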